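(* Let $L>0$, let $p_{\rm ext}\in\mathbb{R}$ be a constant, and let $\bar\ell:\mathcal{U}\to\mathbb{R}$ be a smooth function of four real variables, defined on an open set $\mathcal{U}\subset\mathbb{R}^4$ and written $\bar\ell=\bar\ell(A,A_t,A_s,u)$ (it does not depend explicitly on $s$ or $t$). Let $A,u,p$ be smooth real functions of $(s,t)\in(\mathbb{R}/L\mathbb{Z})\times I$, $I$ an open time interval, with $(A,A_t,A_s,u)(s,t)\in\mathcal{U}$, satisfying $$\partial_t \frac{\partial\bar\ell}{\partial u}+u\,\partial_s\frac{\partial\bar\ell}{\partial u}+2\frac{\partial\bar\ell}{\partial u}\,\partial_s u=-A\,\partial_s p,$$ $$\partial_t\frac{\partial\bar\ell}{\partial A_t}+\partial_s\frac{\partial\bar\ell}{\partial A_s}-\frac{\partial\bar\ell}{\partial A}=p-p_{\rm ext},$$ $$\partial_t A+\partial_s(Au)=0,$$ where all partial derivatives of $\bar\ell$ are evaluated at $(A(s,t),\partial_tA(s,t),\partial_sA(s,t),u(s,t))$. Then the quantity $$E(t)=\int_0^L\Big(\frac{\partial\bar\ell}{\partial A_t}\,\partial_tA+\frac{\partial\bar\ell}{\partial u}\,u-\bar\ell\Big)\,\mathrm{d}s$$ is independent of $t\in I$.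
   Context: This system models an inextensible, unshearable fluid-conveying tube with straight centerline: $s$ is the coordinate along the tube, $A(s,t)$ the cross-sectional area, $u(s,t)$ the fluid velocity, $p$ the fluid pressure (Lagrange multiplier for incompressibility), $p_{\rm ext}$ the external pressure, and $\bar\ell$ the Lagrangian density (with the swirl circulation frozen at a constant value). Periodic boundary conditions in $s$ are assumed. *)

From Stdlib Require Import Reals ClassicalEpsilon.
Open Scope R_scope.

(* The derivative of a real function of one variable at x (the unique l with
   derivable_pt_lim f x l when it exists; an unspecified value otherwise). *)
Definition Dr (f : R -> R) (x : R) : R :=
  epsilon (inhabits 0) (fun l => derivable_pt_lim f x l).

(* Functions of n real variables are encoded as maps (nat -> R) -> R that
   only read coordinates 0..n-1. *)
Definition upd (x : nat -> R) (i : nat) (h : R) : nat -> R :=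
  fun j => if Nat.eqb j i then h else x j.

Definition pd (i : nat) (f : (nat -> R) -> R) (x : nat -> R) : R :=
  Dr (fun h => f (upd x i h)) (x i).

Definition has_pd (i : nat) (f : (nat -> R) -> R) (x : nat -> R) : Prop :=
  exists l, derivable_pt_lim (fun h => f (upd x i h)) (x i) l.

Definition cont_on (n : nat) (U : (nat -> R) -> Prop) (f : (nat -> R) -> R) : Prop :=
  forall x, U x -> forall eps, eps > 0 -> exists delta, delta > 0 /\
    forall y, U y -> (forall i, (i < n)%nat -> Rabs (y i - x i) < delta) ->
      Rabs (f y - f x) < eps.

Fixpoint Ck (n : nat) (U : (nat -> R) -> Prop) (k : nat) (f : (nat -> R) -> R) : Prop :=
  cont_on n U f /\
  match k with
  | O => True
  | S k' => forall i, (i < n)%nat ->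
              (forall x, U x -> has_pd i f x) /\ Ck n U k' (pd i f)
  end.

Definition smooth_on (n : nat) (U : (nat -> R) -> Prop) (f : (nat -> R) -> R) : Prop :=
  forall k, Ck n U k f.

Definition vec4 (a b c d : R) : nat -> R :=
  fun j => match j with 0%nat => a | 1%nat => b | 2%nat => c | _ => d end.
Definition fun4 (g : R -> R -> R -> R -> R) : (nat -> R) -> R :=
  fun x => g (x 0%nat) (x 1%nat) (x 2%nat) (x 3%nat).
Definition pred4 (U : R -> R -> R -> R -> Prop) : (nat -> R) -> Prop :=
  fun x => U (x 0%nat) (x 1%nat) (x 2%nat) (x 3%nat).

Definition open4 (U : R -> R -> R -> R -> Prop) : Prop :=
  forall a b c d, U a b c d -> exists delta, delta > 0 /\
    forall a' b' c' d', Rabs (a' - a) < delta -> Rabs (b' - b) < delta ->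
      Rabs (c' - c) < delta -> Rabs (d' - d) < delta -> U a' b' c' d'.

(* i-th partial derivative of a 4-variable function, as a 4-variable function
   (i = 0: d/dA, 1: d/dA_t, 2: d/dA_s, 3: d/du) *)
Definition lpd (i : nat) (g : R -> R -> R -> R -> R) : R -> R -> R -> R -> R :=
  fun a b c d => pd i (fun4 g) (vec4 a b c d).

Definition fun2 (F : R -> R -> R) : (nat -> R) -> R := fun x => F (x 0%nat) (x 1%nat).
Definition strip (I : R -> Prop) : (nat -> R) -> Prop := fun x => I (x 1%nat).

Definition ds (F : R -> R -> R) (s t : R) : R := Dr (fun s' => F s' t) s.
Definition dt (F : R -> R -> R) (s t : R) : R := Dr (fun t' => F s t') t.

Definition open_itv (I : R -> Prop) : Prop :=
  (exists t, I t) /\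
  (forall x y z, I x -> I z -> x <= y <= z -> I y) /\
  (forall t, I t -> exists delta, delta > 0 /\ forall t', Rabs (t' - t) < delta -> I t').

Definition along (g : R -> R -> R -> R -> R) (A u : R -> R -> R) : R -> R -> R :=
  fun s t => g (A s t) (dt A s t) (ds A s t) (u s t).

(* Let e = l_{A_t} A_t + l_u u - l be the energy density. Differentiating in t, the
   chain-rule terms l_{A_t} A_tt and l_u u_t cancel, and the three equations of motion
   (together with A_st = A_ts) turn the remaining terms into - d/ds of the flux
   F = l_{A_s} A_t + u^2 l_u + (p - p_ext) A u.  Differentiating under the integral sign,
   dE/dt = F(0, t) - F(L, t), which vanishes by periodicity; by the mean value theorem E is
   constant on the time interval. *)

From Stdlib Require Import Reals Lra Lia ClassicalEpsilon.
From Coquelicot Require Import Coquelicot.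
Open Scope R_scope.

(** * Derivatives and a partial chain rule *)

Lemma Dr_eq f x l : derivable_pt_lim f x l -> Dr f x = l.
Proof.
  intros H; apply (uniqueness_limite f x); [|exact H].
  apply (epsilon_spec (inhabits 0) (fun l => derivable_pt_lim f x l)).
  now exists l.
Qed.

Lemma derivable_pt_lim_Dr f x l : derivable_pt_lim f x l -> derivable_pt_lim f x (Dr f x).
Proof. intros H; now rewrite (Dr_eq f x l H). Qed.

Lemma Derive_eq f x l : derivable_pt_lim f x l -> Derive f x = l.
Proof. intros H; apply is_derive_unique, is_derive_Reals, H. Qed.

Lemma Rabs_sub_between a b c :
  Rmin a b <= c <= Rmax a b -> Rabs (c - a) <= Rabs (b - a).
Proof.
  unfold Rmin, Rmax, Rabs; destruct (Rle_dec a b); intros Hc;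
    repeat destruct Rcase_abs; lra.
Qed.

Lemma derivable_pt_lim_bound a t0 a' : derivable_pt_lim a t0 a' ->
  exists d, d > 0 /\ forall t, Rabs (t - t0) < d ->
    Rabs (a t - a t0) <= (Rabs a' + 1) * Rabs (t - t0).
Proof.
  intros Ha; destruct (Ha 1 Rlt_0_1) as [d Hd].
  exists d; split; [apply cond_pos|]; intros t Ht.
  destruct (Req_dec t t0) as [->|Hne].
  { unfold Rminus; rewrite !Rplus_opp_r, Rabs_R0; lra. }
  specialize (Hd (t - t0) ltac:(lra) Ht); replace (t0 + (t - t0)) with t in Hd by ring.
  replace (a t - a t0) with ((a t - a t0) / (t - t0) * (t - t0)) by (field; lra).
  rewrite Rabs_mult; apply Rmult_le_compat_r; [apply Rabs_pos|].
  pose proof (Rabs_triang ((a t - a t0) / (t - t0) - a') a') as Htri.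
  replace ((a t - a t0) / (t - t0) - a' + a') with ((a t - a t0) / (t - t0)) in Htri by ring.
  lra.
Qed.

Lemma derivable_pt_lim_small r t0 :
  r t0 = 0 ->
  (forall eps, eps > 0 -> exists d, d > 0 /\
     forall t, Rabs (t - t0) < d -> Rabs (r t) <= eps * Rabs (t - t0)) ->
  derivable_pt_lim r t0 0.
Proof.
  intros H0 Hr eps Heps.
  destruct (Hr (eps / 2) ltac:(lra)) as [d [Hd Hrd]].
  exists (mkposreal d Hd); intros h Hh0 Hh; simpl in Hh.
  specialize (Hrd (t0 + h)); replace (t0 + h - t0) with h in Hrd by ring.
  rewrite H0, !Rminus_0_r, Rabs_div by exact Hh0.
  pose proof (Rabs_pos_lt h Hh0).
  apply Rlt_div_l; [lra|]. specialize (Hrd Hh). nra.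
Qed.

Lemma partial_increment_small (F Fx : R -> R -> R) x0 t0 :
  locally_2d (fun x t => derivable_pt_lim (fun z => F z t) x (Fx x t)) x0 t0 ->
  continuity_2d_pt Fx x0 t0 ->
  forall eps, eps > 0 -> exists d, d > 0 /\ forall x t,
    Rabs (x - x0) < d -> Rabs (t - t0) < d ->
    Rabs (F x t - F x0 t - Fx x0 t0 * (x - x0)) <= eps * Rabs (x - x0).
Proof.
  intros [d1 HF] HFx eps Heps.
  destruct (HFx (mkposreal eps Heps)) as [d2 HFx']; simpl in HFx'.
  exists (Rmin d1 d2); split; [apply Rmin_pos; apply cond_pos|].
  intros x t Hx Ht.
  pose proof (Rmin_l d1 d2); pose proof (Rmin_r d1 d2).
  assert (Hnear : forall c, Rmin x0 x <= c <= Rmax x0 x -> Rabs (c - x0) < Rmin d1 d2)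
    by (intros c Hc; pose proof (Rabs_sub_between x0 x c Hc); lra).
  destruct (MVT_gen (fun z => F z t) x0 x (fun z => Fx z t)) as [c [Hc Hmvt]]; cbv zeta in *.
  - intros c Hc; apply is_derive_Reals, HF; [pose proof (Hnear c ltac:(lra))|]; lra.
  - intros c Hc; apply derivable_continuous_pt; exists (Fx c t).
    apply HF; [pose proof (Hnear c Hc)|]; lra.
  - rewrite Hmvt, <- Rmult_minus_distr_r, Rabs_mult.
    apply Rmult_le_compat_r; [apply Rabs_pos|].
    left; apply HFx'; [pose proof (Hnear c Hc)|]; lra.
Qed.

Lemma derivable_pt_lim_comp_partial (F Fx : R -> R -> R) (a : R -> R) t0 a' m :
  locally_2d (fun x t => derivable_pt_lim (fun z => F z t) x (Fx x t)) (a t0) t0 ->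
  continuity_2d_pt Fx (a t0) t0 ->
  derivable_pt_lim a t0 a' ->
  derivable_pt_lim (fun t => F (a t0) t) t0 m ->
  derivable_pt_lim (fun t => F (a t) t) t0 (Fx (a t0) t0 * a' + m).
Proof.
  intros HF HFx Ha Hm.
  set (D := Fx (a t0) t0).
  (* The remainder is o(t - t0) by the mean value theorem in the first argument. *)
  set (rem t := F (a t) t - F (a t0) t - D * (a t - a t0)).
  assert (Hrem : derivable_pt_lim rem t0 0).
  { apply derivable_pt_lim_small; [unfold rem; ring|]; intros eps Heps.
    destruct (derivable_pt_lim_bound a t0 a' Ha) as [d1 [Hd1 Hlip]].
    set (K := Rabs a' + 1).
    assert (HK : K > 0) by (unfold K; pose proof (Rabs_pos a'); lra).
    destruct (partial_increment_small F Fx (a t0) t0 HF HFx (eps / K)) as [d2 [Hd2 Hinc]].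
    { apply Rdiv_lt_0_compat; lra. }
    assert (Hd2K : d2 / K > 0) by (apply Rdiv_lt_0_compat; lra).
    exists (Rmin d1 (Rmin d2 (d2 / K))); split; [repeat apply Rmin_pos; lra|].
    intros t Ht.
    pose proof (Rmin_l d1 (Rmin d2 (d2 / K))); pose proof (Rmin_r d1 (Rmin d2 (d2 / K))).
    pose proof (Rmin_l d2 (d2 / K)); pose proof (Rmin_r d2 (d2 / K)).
    specialize (Hlip t ltac:(lra)); fold K in Hlip.
    assert (Hat : Rabs (a t - a t0) < d2).
    { apply Rle_lt_trans with (K * Rabs (t - t0)); [exact Hlip|].
      replace d2 with (K * (d2 / K)) by (field; lra).
      apply Rmult_lt_compat_l; lra. }
    eapply Rle_trans; [apply Hinc; lra|].
    replace (eps * Rabs (t - t0)) with (eps / K * (K * Rabs (t - t0))) by (field; lra).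
    apply Rmult_le_compat_l; [left; apply Rdiv_lt_0_compat|]; lra. }
  apply derivable_pt_lim_ext with (fun t => rem t + F (a t0) t + D * (a t - a t0)).
  { intros t; unfold rem; ring. }
  replace (D * a' + m) with (0 + m + D * (a' - 0)) by ring.
  apply derivable_pt_lim_plus; [apply derivable_pt_lim_plus; assumption|].
  apply (derivable_pt_lim_scal (fun t => a t - a t0)).
  apply (derivable_pt_lim_minus a (fun _ => a t0)); [exact Ha | apply derivable_pt_lim_const].
Qed.

(** * Functions of four variables *)

Definition continuous4_at (g : R -> R -> R -> R -> R) a b c d : Prop :=
  forall eps, eps > 0 -> exists del, del > 0 /\ forall a' b' c' d',
    Rabs (a' - a) < del -> Rabs (b' - b) < del -> Rabs (c' - c) < del ->
    Rabs (d' - d) < del -> Rabs (g a' b' c' d' - g a b c d) < eps.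

Lemma continuity_2d_pt_comp4 (g : R -> R -> R -> R -> R) (f0 f1 f2 f3 : R -> R -> R) x t :
  continuous4_at g (f0 x t) (f1 x t) (f2 x t) (f3 x t) ->
  continuity_2d_pt f0 x t -> continuity_2d_pt f1 x t ->
  continuity_2d_pt f2 x t -> continuity_2d_pt f3 x t ->
  continuity_2d_pt (fun x t => g (f0 x t) (f1 x t) (f2 x t) (f3 x t)) x t.
Proof.
  intros Hg H0 H1 H2 H3 eps.
  destruct (Hg eps (cond_pos eps)) as [d [Hd Hgd]].
  set (e := mkposreal d Hd).
  destruct (H0 e) as [d0 K0]; destruct (H1 e) as [d1 K1];
  destruct (H2 e) as [d2 K2]; destruct (H3 e) as [d3 K3].
  assert (Hm : 0 < Rmin (Rmin d0 d1) (Rmin d2 d3))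
    by (repeat apply Rmin_pos; apply cond_pos).
  exists (mkposreal _ Hm); simpl; intros x' t' Hx Ht.
  pose proof (Rmin_l (Rmin d0 d1) (Rmin d2 d3)); pose proof (Rmin_r (Rmin d0 d1) (Rmin d2 d3));
  pose proof (Rmin_l d0 d1); pose proof (Rmin_r d0 d1);
  pose proof (Rmin_l d2 d3); pose proof (Rmin_r d2 d3).
  apply Hgd; [apply K0|apply K1|apply K2|apply K3]; lra.
Qed.

Lemma open4_locally_2d U (f0 f1 f2 f3 : R -> R -> R) x t :
  open4 U -> U (f0 x t) (f1 x t) (f2 x t) (f3 x t) ->
  continuity_2d_pt f0 x t -> continuity_2d_pt f1 x t ->
  continuity_2d_pt f2 x t -> continuity_2d_pt f3 x t ->
  locally_2d (fun x t => U (f0 x t) (f1 x t) (f2 x t) (f3 x t)) x t.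
Proof.
  intros HU Hpt H0 H1 H2 H3.
  destruct (HU _ _ _ _ Hpt) as [rho [Hrho Hball]].
  set (e := mkposreal rho Hrho).
  destruct (H0 e) as [d0 K0]; destruct (H1 e) as [d1 K1];
  destruct (H2 e) as [d2 K2]; destruct (H3 e) as [d3 K3].
  assert (Hm : 0 < Rmin (Rmin d0 d1) (Rmin d2 d3))
    by (repeat apply Rmin_pos; apply cond_pos).
  exists (mkposreal _ Hm); simpl; intros x' t' Hx Ht.
  pose proof (Rmin_l (Rmin d0 d1) (Rmin d2 d3)); pose proof (Rmin_r (Rmin d0 d1) (Rmin d2 d3));
  pose proof (Rmin_l d0 d1); pose proof (Rmin_r d0 d1);
  pose proof (Rmin_l d2 d3); pose proof (Rmin_r d2 d3).
  apply Hball; [apply K0|apply K1|apply K2|apply K3]; lra.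
Qed.

Definition smooth4 U (g : R -> R -> R -> R -> R) := smooth_on 4 (pred4 U) (fun4 g).

Lemma smooth4_lpd U g i : (i < 4)%nat -> smooth4 U g -> smooth4 U (lpd i g).
Proof.
  intros Hi Hg k; destruct (Hg (S k)) as [_ Hd]; destruct (Hd i Hi) as [_ Hk].
  destruct i as [|[|[|[|i]]]]; [exact Hk..|lia].
Qed.

Lemma smooth4_continuous4_at U g a b c d :
  open4 U -> smooth4 U g -> U a b c d -> continuous4_at g a b c d.
Proof.
  intros HU Hg Hpt eps Heps.
  destruct (HU a b c d Hpt) as [rho [Hrho Hball]].
  destruct (Hg O) as [Hcont _].
  destruct (Hcont (vec4 a b c d) Hpt eps Heps) as [del [Hdel Hg']].
  exists (Rmin del rho); split; [apply Rmin_pos; lra|].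
  intros a' b' c' d' H1 H2 H3 H4.
  pose proof (Rmin_l del rho); pose proof (Rmin_r del rho).
  apply (Hg' (vec4 a' b' c' d')).
  - apply Hball; simpl; lra.
  - intros [|[|[|[|i]]]] Hi; simpl; try lra; lia.
Qed.

Lemma smooth4_partials U g a b c d : smooth4 U g -> U a b c d ->
  derivable_pt_lim (fun h => g h b c d) a (lpd 0 g a b c d) /\
  derivable_pt_lim (fun h => g a h c d) b (lpd 1 g a b c d) /\
  derivable_pt_lim (fun h => g a b h d) c (lpd 2 g a b c d) /\
  derivable_pt_lim (fun h => g a b c h) d (lpd 3 g a b c d).
Proof.
  intros Hg Hpt; destruct (Hg 1%nat) as [_ Hd].
  assert (Hi : forall i, (i < 4)%nat -> exists l,
            derivable_pt_lim (fun h => fun4 g (upd (vec4 a b c d) i h)) (vec4 a b c d i) l)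
    by (intros i Hi; now apply (Hd i Hi)).
  destruct (Hi 0%nat) as [l0 H0]; [lia|]; destruct (Hi 1%nat) as [l1 H1]; [lia|];
  destruct (Hi 2%nat) as [l2 H2]; [lia|]; destruct (Hi 3%nat) as [l3 H3]; [lia|].
  repeat split; eapply derivable_pt_lim_Dr; eassumption.
Qed.

Lemma continuity_2d_pt_smooth4_comp U g (f0 f1 f2 f3 : R -> R -> R) x t :
  open4 U -> smooth4 U g -> U (f0 x t) (f1 x t) (f2 x t) (f3 x t) ->
  continuity_2d_pt f0 x t -> continuity_2d_pt f1 x t ->
  continuity_2d_pt f2 x t -> continuity_2d_pt f3 x t ->
  continuity_2d_pt (fun x t => g (f0 x t) (f1 x t) (f2 x t) (f3 x t)) x t.
Proof.
  intros HU Hg Hpt; apply continuity_2d_pt_comp4.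
  now apply (smooth4_continuous4_at U).
Qed.

Lemma continuity_2d_pt_of_derivable f t0 f' x :
  derivable_pt_lim f t0 f' -> continuity_2d_pt (fun _ t => f t) x t0.
Proof.
  intros Hf; apply (continuity_1d_2d_pt_comp f (fun _ t => t)).
  - apply derivable_continuous_pt; now exists f'.
  - apply continuity_2d_pt_id2.
Qed.

Lemma derivable_pt_lim_comp4 U g (a b c d : R -> R) t0 a' b' c' d' :
  open4 U -> smooth4 U g -> U (a t0) (b t0) (c t0) (d t0) ->
  derivable_pt_lim a t0 a' -> derivable_pt_lim b t0 b' ->
  derivable_pt_lim c t0 c' -> derivable_pt_lim d t0 d' ->
  derivable_pt_lim (fun t => g (a t) (b t) (c t) (d t)) t0
    (lpd 0 g (a t0) (b t0) (c t0) (d t0) * a' + lpd 1 g (a t0) (b t0) (c t0) (d t0) * b'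
     + lpd 2 g (a t0) (b t0) (c t0) (d t0) * c' + lpd 3 g (a t0) (b t0) (c t0) (d t0) * d').
Proof.
  intros HU Hg Hpt Ha Hb Hc Hd.
  set (a0 := a t0) in *; set (b0 := b t0) in *; set (c0 := c t0) in *; set (d0 := d t0) in *.
  pose proof (fun x => continuity_2d_pt_const x t0) as Hcst.
  pose proof (fun x => continuity_2d_pt_id1 x t0) as Hid.
  pose proof continuity_2d_pt_of_derivable as Hlift.
  assert (Hpart : forall x y z w, U x y z w ->
            derivable_pt_lim (fun h => g h y z w) x (lpd 0 g x y z w) /\
            derivable_pt_lim (fun h => g x h z w) y (lpd 1 g x y z w) /\
            derivable_pt_lim (fun h => g x y h w) z (lpd 2 g x y z w) /\
            derivable_pt_lim (fun h => g x y z h) w (lpd 3 g x y z w))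
    by (intros; now apply (smooth4_partials U)).
  assert (Sd : derivable_pt_lim (fun t => g a0 b0 c0 (d t)) t0 (lpd 3 g a0 b0 c0 d0 * d'))
    by (apply (derivable_pt_lim_comp d (fun h => g a0 b0 c0 h)); [exact Hd | apply Hpart, Hpt]).
  assert (Sc : derivable_pt_lim (fun t => g a0 b0 (c t) (d t)) t0
                 (lpd 2 g a0 b0 c0 d0 * c' + lpd 3 g a0 b0 c0 d0 * d')).
  { apply (derivable_pt_lim_comp_partial (fun x t => g a0 b0 x (d t))
             (fun x t => lpd 2 g a0 b0 x (d t)) c); [| |exact Hc|exact Sd].
    - apply (locally_2d_impl (fun x t => U a0 b0 x (d t)));
        [apply locally_2d_forall; intros x t Hxt; apply (Hpart _ _ _ _ Hxt)|].
      apply (open4_locally_2d U (fun _ _ => a0) (fun _ _ => b0) (fun x _ => x)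
               (fun _ t => d t)); eauto.
    - refine (continuity_2d_pt_smooth4_comp U (lpd 2 g) (fun _ _ => a0) (fun _ _ => b0)
                (fun x _ => x) (fun _ t => d t) c0 t0 HU
                (smooth4_lpd U g 2 ltac:(lia) Hg) _ _ _ _ _); eauto. }
  assert (Sb : derivable_pt_lim (fun t => g a0 (b t) (c t) (d t)) t0
                 (lpd 1 g a0 b0 c0 d0 * b'
                  + (lpd 2 g a0 b0 c0 d0 * c' + lpd 3 g a0 b0 c0 d0 * d'))).
  { apply (derivable_pt_lim_comp_partial (fun x t => g a0 x (c t) (d t))
             (fun x t => lpd 1 g a0 x (c t) (d t)) b); [| |exact Hb|exact Sc].
    - apply (locally_2d_impl (fun x t => U a0 x (c t) (d t)));
        [apply locally_2d_forall; intros x t Hxt; apply (Hpart _ _ _ _ Hxt)|].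
      apply (open4_locally_2d U (fun _ _ => a0) (fun x _ => x) (fun _ t => c t)
               (fun _ t => d t)); eauto.
    - refine (continuity_2d_pt_smooth4_comp U (lpd 1 g) (fun _ _ => a0) (fun x _ => x)
                (fun _ t => c t) (fun _ t => d t) b0 t0 HU
                (smooth4_lpd U g 1 ltac:(lia) Hg) _ _ _ _ _); eauto. }
  replace (_ + _ + _ + _) with
    (lpd 0 g a0 b0 c0 d0 * a' + (lpd 1 g a0 b0 c0 d0 * b'
     + (lpd 2 g a0 b0 c0 d0 * c' + lpd 3 g a0 b0 c0 d0 * d'))) by ring.
  apply (derivable_pt_lim_comp_partial (fun x t => g x (b t) (c t) (d t))
           (fun x t => lpd 0 g x (b t) (c t) (d t)) a); [| |exact Ha|exact Sb].
  - apply (locally_2d_impl (fun x t => U x (b t) (c t) (d t)));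
      [apply locally_2d_forall; intros x t Hxt; apply (Hpart _ _ _ _ Hxt)|].
    apply (open4_locally_2d U (fun x _ => x) (fun _ t => b t) (fun _ t => c t)
             (fun _ t => d t)); eauto.
  - refine (continuity_2d_pt_smooth4_comp U (lpd 0 g) (fun x _ => x) (fun _ t => b t)
              (fun _ t => c t) (fun _ t => d t) a0 t0 HU
                (smooth4_lpd U g 0 ltac:(lia) Hg) _ _ _ _ _); eauto.
Qed.

(** * Smooth functions of (s, t) *)

Definition smooth2 J (F : R -> R -> R) := smooth_on 2 (strip J) (fun2 F).

Definition vec2 (s t : R) : nat -> R := fun j => match j with 0%nat => s | _ => t end.

Lemma open_itv_locally J t : open_itv J -> J t -> locally t J.
Proof.
  intros [_ [_ HJ]] Ht; destruct (HJ t Ht) as [d [Hd HJd]].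
  exists (mkposreal d Hd); intros y Hy; apply HJd, Hy.
Qed.

Lemma open_itv_locally_2d J (P : R -> R -> Prop) s t : open_itv J -> J t ->
  (forall s' t', J t' -> P s' t') -> locally_2d P s t.
Proof.
  intros [_ [_ HJ]] Ht HP; destruct (HJ t Ht) as [d [Hd HJd]].
  exists (mkposreal d Hd); intros s' t' _ Ht'; apply HP, HJd, Ht'.
Qed.

Lemma smooth2_ds J F : smooth2 J F -> smooth2 J (ds F).
Proof. intros HF k; destruct (HF (S k)) as [_ Hd]; now destruct (Hd 0%nat ltac:(lia)). Qed.

Lemma smooth2_dt J F : smooth2 J F -> smooth2 J (dt F).
Proof. intros HF k; destruct (HF (S k)) as [_ Hd]; now destruct (Hd 1%nat ltac:(lia)). Qed.

Lemma smooth2_derivable_s J F s t : smooth2 J F -> J t ->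
  derivable_pt_lim (fun s' => F s' t) s (ds F s t).
Proof.
  intros HF Ht; destruct (HF 1%nat) as [_ Hd]; destruct (Hd 0%nat ltac:(lia)) as [Hex _].
  destruct (Hex (vec2 s t) Ht) as [l Hl]; exact (derivable_pt_lim_Dr _ _ _ Hl).
Qed.

Lemma smooth2_derivable_t J F s t : smooth2 J F -> J t ->
  derivable_pt_lim (fun t' => F s t') t (dt F s t).
Proof.
  intros HF Ht; destruct (HF 1%nat) as [_ Hd]; destruct (Hd 1%nat ltac:(lia)) as [Hex _].
  destruct (Hex (vec2 s t) Ht) as [l Hl]; exact (derivable_pt_lim_Dr _ _ _ Hl).
Qed.

Lemma smooth2_continuity_2d_pt J F s t : open_itv J -> smooth2 J F -> J t ->
  continuity_2d_pt F s t.
Proof.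
  intros [_ [_ HJ]] HF Ht eps; destruct (HJ t Ht) as [r [Hr HJt]].
  destruct (HF O) as [Hc _].
  destruct (Hc (vec2 s t) Ht eps (cond_pos eps)) as [d [Hd Hcd]].
  exists (mkposreal _ (Rmin_pos _ _ Hd Hr)); simpl; intros s' t' Hs Ht'.
  pose proof (Rmin_l d r); pose proof (Rmin_r d r).
  apply (Hcd (vec2 s' t')).
  - apply HJt; simpl; lra.
  - intros [|[|i]] Hi; simpl; try lra; lia.
Qed.

Section MixedPartials.

Variables (J : R -> Prop) (F : R -> R -> R).
Hypotheses (HJ : open_itv J) (HF : smooth2 J F).

Lemma Derive_Derive_ts s t : J t ->
  Derive (fun z => Derive (fun t' => F z t') t) s = ds (dt F) s t.
Proof.
  intros Ht; rewrite (Derive_ext _ (fun z => dt F z t)).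
  - apply Derive_eq, (smooth2_derivable_s J); [now apply smooth2_dt | exact Ht].
  - intros z; apply Derive_eq, (smooth2_derivable_t J); assumption.
Qed.

Lemma locally_Derive_s s t : J t ->
  locally t (fun t' => Derive (fun s' => F s' t') s = ds F s t').
Proof.
  intros Ht; apply (filter_imp J); [|now apply open_itv_locally].
  intros t' Ht'; apply Derive_eq, (smooth2_derivable_s J); assumption.
Qed.

Lemma Derive_Derive_st s t : J t ->
  Derive (fun z => Derive (fun s' => F s' z) s) t = dt (ds F) s t.
Proof.
  intros Ht; rewrite (Derive_ext_loc _ (fun z => ds F s z)).
  - apply Derive_eq, (smooth2_derivable_t J); [now apply smooth2_ds | exact Ht].
  - now apply locally_Derive_s.
Qed.

Lemma dt_ds_comm s t : J t -> dt (ds F) s t = ds (dt F) s t.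
Proof.
  intros Ht; rewrite <- Derive_Derive_st, <- Derive_Derive_ts by exact Ht.
  symmetry; apply Schwarz.
  - apply (open_itv_locally_2d J); [exact HJ | exact Ht|]; intros u v Hv.
    repeat split; apply ex_derive_Reals_1.
    + exists (ds F u v); now apply (smooth2_derivable_s J).
    + exists (dt F u v); now apply (smooth2_derivable_t J).
    + exists (ds (dt F) u v).
      apply derivable_pt_lim_ext with (fun z => dt F z v).
      { intros z; symmetry; apply Derive_eq, (smooth2_derivable_t J); assumption. }
      apply (smooth2_derivable_s J); [now apply smooth2_dt | exact Hv].
    + exists (dt (ds F) u v).
      apply is_derive_Reals, (is_derive_ext_loc (fun z => ds F u z)).
      * apply (filter_imp (fun z => Derive (fun s' => F s' z) u = ds F u z));
          [now intros z -> | now apply locally_Derive_s].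
      * apply is_derive_Reals, (smooth2_derivable_t J); [now apply smooth2_ds | exact Hv].
  - apply continuity_2d_pt_ext_loc with (ds (dt F)).
    + apply (open_itv_locally_2d J); [exact HJ | exact Ht|]; intros u v Hv.
      symmetry; apply Derive_Derive_ts, Hv.
    + apply (smooth2_continuity_2d_pt J); [exact HJ | now apply smooth2_ds, smooth2_dt | exact Ht].
  - apply continuity_2d_pt_ext_loc with (dt (ds F)).
    + apply (open_itv_locally_2d J); [exact HJ | exact Ht|]; intros u v Hv.
      symmetry; apply Derive_Derive_st, Hv.
    + apply (smooth2_continuity_2d_pt J); [exact HJ | now apply smooth2_dt, smooth2_ds | exact Ht].
Qed.

End MixedPartials.

Lemma continuity_2d_pt_swap F s t :
  continuity_2d_pt F s t -> continuity_2d_pt (fun x y => F y x) t s.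
Proof. intros H eps; destruct (H eps) as [d Hd]; exists d; intros u v Hu Hv; now apply Hd. Qed.

Lemma continuity_2d_pt_continuous_l F s t :
  continuity_2d_pt F s t -> continuous (fun x => F x t) s.
Proof.
  intros H; apply filterlim_locally; intros eps; apply (locally_2d_1d_const_y _ s t (H eps)).
Qed.

Lemma derivable_pt_lim_periodic f T x l : (forall y, f (y + T) = f y) ->
  derivable_pt_lim f x l -> derivable_pt_lim f (x + T) l.
Proof.
  intros Hf H eps Heps; destruct (H eps Heps) as [d Hd]; exists d; intros h Hh0 Hh.
  replace (x + T + h) with (x + h + T) by ring; rewrite !Hf; now apply Hd.
Qed.

Lemma periodic_ds J F T s t : smooth2 J F -> J t -> (forall s, F (s + T) t = F s t) ->
  ds F (s + T) t = ds F s t.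
Proof.
  intros HF Ht Hper; apply Dr_eq, (derivable_pt_lim_periodic (fun s' => F s' t)); [exact Hper|].
  now apply (smooth2_derivable_s J).
Qed.

Lemma periodic_dt J F T s t : open_itv J -> smooth2 J F -> J t ->
  (forall s t, J t -> F (s + T) t = F s t) -> dt F (s + T) t = dt F s t.
Proof.
  intros [_ [_ HJ]] HF Ht Hper; destruct (HJ t Ht) as [d [Hd HJd]].
  apply Dr_eq, (derivable_pt_lim_locally_ext (fun t' => F s t') _ t (t - d) (t + d)); [lra| |].
  - intros z Hz; symmetry; apply Hper, HJd; unfold Rabs; destruct Rcase_abs; lra.
  - now apply (smooth2_derivable_t J).
Qed.

Lemma open_itv_derivable_zero_const J f t1 t2 : open_itv J ->
  (forall t, J t -> derivable_pt_lim f t 0) -> J t1 -> J t2 -> f t1 = f t2.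
Proof.
  intros [_ [Hconv _]] Hf H1 H2.
  destruct (Rtotal_order t1 t2) as [H|[->|H]]; [| reflexivity |].
  - destruct (MVT_cor2 f (fun _ => 0) t1 t2 H) as [c [Hc _]];
      [intros c Hc; apply Hf, (Hconv t1 c t2); auto | lra].
  - destruct (MVT_cor2 f (fun _ => 0) t2 t1 H) as [c [Hc _]];
      [intros c Hc; apply Hf, (Hconv t2 c t1); auto | lra].
Qed.

(** * Energy balance along a solution *)

Section Solution.

Variables (U : R -> R -> R -> R -> Prop) (J : R -> Prop) (A u : R -> R -> R).
Hypotheses (HU : open4 U) (HJ : open_itv J) (HA : smooth2 J A) (Hu : smooth2 J u)
  (HAU : forall s t, J t -> U (A s t) (dt A s t) (ds A s t) (u s t)).

Definition along_deriv (D : (R -> R -> R) -> R -> R -> R) (g : R -> R -> R -> R -> R) s t :=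
  along (lpd 0 g) A u s t * D A s t + along (lpd 1 g) A u s t * D (dt A) s t
  + along (lpd 2 g) A u s t * D (ds A) s t + along (lpd 3 g) A u s t * D u s t.

Lemma along_derivable_t g s t : smooth4 U g -> J t ->
  derivable_pt_lim (fun t' => along g A u s t') t (along_deriv dt g s t).
Proof.
  intros Hg Ht; unfold along, along_deriv.
  apply (derivable_pt_lim_comp4 U g (fun t' => A s t') (fun t' => dt A s t')
           (fun t' => ds A s t') (fun t' => u s t')); auto;
    apply (smooth2_derivable_t J); auto using smooth2_dt, smooth2_ds.
Qed.

Lemma along_derivable_s g s t : smooth4 U g -> J t ->
  derivable_pt_lim (fun s' => along g A u s' t) s (along_deriv ds g s t).
Proof.
  intros Hg Ht; unfold along, along_deriv.
  apply (derivable_pt_lim_comp4 U g (fun s' => A s' t) (fun s' => dt A s' t)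
           (fun s' => ds A s' t) (fun s' => u s' t)); auto;
    apply (smooth2_derivable_s J); auto using smooth2_dt, smooth2_ds.
Qed.

Lemma continuity_2d_pt_along g s t : smooth4 U g -> J t -> continuity_2d_pt (along g A u) s t.
Proof.
  intros Hg Ht; unfold along.
  refine (continuity_2d_pt_smooth4_comp U g A (dt A) (ds A) u s t HU Hg (HAU s t Ht) _ _ _ _);
    apply (smooth2_continuity_2d_pt J); auto using smooth2_dt, smooth2_ds.
Qed.

Lemma continuity_2d_pt_dt_along g s t : smooth4 U g -> J t ->
  continuity_2d_pt (dt (along g A u)) s t.
Proof.
  intros Hg Ht; apply continuity_2d_pt_ext_loc with (along_deriv dt g).
  - apply (open_itv_locally_2d J); auto; intros s' t' Ht'.
    symmetry; apply Dr_eq, along_derivable_t; auto.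
  - unfold along_deriv.
    repeat apply continuity_2d_pt_plus; apply continuity_2d_pt_mult;
      first [apply continuity_2d_pt_along | apply (smooth2_continuity_2d_pt J)];
      auto using smooth2_dt, smooth2_ds; apply smooth4_lpd; auto; lia.
Qed.

Section Energy.

Variables (l : R -> R -> R -> R -> R) (p : R -> R -> R) (pext L : R).
Hypotheses (Hl : smooth4 U l) (Hp : smooth2 J p)
  (Hper : forall s t, J t -> A (s + L) t = A s t /\ u (s + L) t = u s t /\ p (s + L) t = p s t)
  (Hmom : forall s t, J t ->
     dt (along (lpd 3 l) A u) s t + u s t * ds (along (lpd 3 l) A u) s t
       + 2 * along (lpd 3 l) A u s t * ds u s t = - A s t * ds p s t)
  (Harea : forall s t, J t ->
     dt (along (lpd 1 l) A u) s t + ds (along (lpd 2 l) A u) s t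
       - along (lpd 0 l) A u s t = p s t - pext)
  (Hmass : forall s t, J t -> dt A s t + ds (fun s' t' => A s' t' * u s' t') s t = 0).

Definition energy_density s t :=
  along (lpd 1 l) A u s t * dt A s t + along (lpd 3 l) A u s t * u s t - along l A u s t.

Definition energy_rate s t :=
  dt (along (lpd 1 l) A u) s t * dt A s t + dt (along (lpd 3 l) A u) s t * u s t
  - along (lpd 0 l) A u s t * dt A s t - along (lpd 2 l) A u s t * dt (ds A) s t.

Definition energy_flux s t :=
  along (lpd 2 l) A u s t * dt A s t + u s t * u s t * along (lpd 3 l) A u s t
  + (p s t - pext) * A s t * u s t.

Lemma energy_density_derivable_t s t : J t ->
  derivable_pt_lim (fun t' => energy_density s t') t (energy_rate s t).
Proof.
  intros Ht.
  pose proof (derivable_pt_lim_Dr _ _ _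
                (along_derivable_t _ s t (smooth4_lpd U l 1 ltac:(lia) Hl) Ht)) as D1.
  pose proof (derivable_pt_lim_Dr _ _ _
                (along_derivable_t _ s t (smooth4_lpd U l 3 ltac:(lia) Hl) Ht)) as D3.
  pose proof (along_derivable_t l s t Hl Ht) as D0.
  pose proof (smooth2_derivable_t J (dt A) s t (smooth2_dt J A HA) Ht) as DA.
  pose proof (smooth2_derivable_t J u s t Hu Ht) as Du.
  replace (energy_rate s t) with
    (dt (along (lpd 1 l) A u) s t * dt A s t + along (lpd 1 l) A u s t * dt (dt A) s t
     + (dt (along (lpd 3 l) A u) s t * u s t + along (lpd 3 l) A u s t * dt u s t)
     - along_deriv dt l s t) by (unfold energy_rate, along_deriv; ring).
  exact (derivable_pt_lim_minus _ _ t _ _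
           (derivable_pt_lim_plus _ _ t _ _ (derivable_pt_lim_mult _ _ t _ _ D1 DA)
              (derivable_pt_lim_mult _ _ t _ _ D3 Du)) D0).
Qed.

Lemma energy_flux_derivable_s s t : J t ->
  derivable_pt_lim (fun s' => energy_flux s' t) s
    (ds (along (lpd 2 l) A u) s t * dt A s t + along (lpd 2 l) A u s t * ds (dt A) s t
     + (2 * u s t * ds u s t * along (lpd 3 l) A u s t
        + u s t * u s t * ds (along (lpd 3 l) A u) s t)
     + (ds p s t * A s t * u s t + (p s t - pext) * (ds A s t * u s t + A s t * ds u s t))).
Proof.
  intros Ht.
  pose proof (derivable_pt_lim_Dr _ _ _
                (along_derivable_s _ s t (smooth4_lpd U l 2 ltac:(lia) Hl) Ht)) as D2.
  pose proof (derivable_pt_lim_Dr _ _ _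
                (along_derivable_s _ s t (smooth4_lpd U l 3 ltac:(lia) Hl) Ht)) as D3.
  pose proof (smooth2_derivable_s J A s t HA Ht) as DA.
  pose proof (smooth2_derivable_s J (dt A) s t (smooth2_dt J A HA) Ht) as DAt.
  pose proof (smooth2_derivable_s J u s t Hu Ht) as Du.
  pose proof (smooth2_derivable_s J p s t Hp Ht) as Dp.
  pose proof (derivable_pt_lim_minus _ _ s _ _ Dp (derivable_pt_lim_const pext s)) as Dpp.
  pose proof (derivable_pt_lim_plus _ _ s _ _
    (derivable_pt_lim_plus _ _ s _ _
       (derivable_pt_lim_mult _ _ s _ _ D2 DAt)
       (derivable_pt_lim_mult _ _ s _ _ (derivable_pt_lim_mult _ _ s _ _ Du Du) D3))
    (derivable_pt_lim_mult _ _ s _ _ (derivable_pt_lim_mult _ _ s _ _ Dpp DA) Du)) as H.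
  refine (eq_ind _ (derivable_pt_lim (fun s' => energy_flux s' t) s) H _ _).
  unfold ds, mult_fct, minus_fct, fct_cte; ring.
Qed.

Lemma energy_balance s t : J t ->
  derivable_pt_lim (fun s' => - energy_flux s' t) s (energy_rate s t).
Proof.
  intros Ht.
  assert (HAu : ds (fun s' t' => A s' t' * u s' t') s t = ds A s t * u s t + A s t * ds u s t).
  { apply Dr_eq, (derivable_pt_lim_mult (fun s' => A s' t) (fun s' => u s' t));
      now apply (smooth2_derivable_s J). }
  assert (HAt : dt A s t = - (ds A s t * u s t + A s t * ds u s t))
    by (pose proof (Hmass s t Ht); lra).
  assert (Hl1 : dt (along (lpd 1 l) A u) s t
                = p s t - pext - ds (along (lpd 2 l) A u) s t + along (lpd 0 l) A u s t)
    by (pose proof (Harea s t Ht); lra).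
  assert (Hl3 : dt (along (lpd 3 l) A u) s t
                = - A s t * ds p s t - u s t * ds (along (lpd 3 l) A u) s t
                  - 2 * along (lpd 3 l) A u s t * ds u s t)
    by (pose proof (Hmom s t Ht); lra).
  pose proof (derivable_pt_lim_opp _ s _ (energy_flux_derivable_s s t Ht)) as H.
  refine (eq_ind _ (derivable_pt_lim (fun s' => - energy_flux s' t) s) H _ _).
  unfold energy_rate; rewrite Hl1, Hl3, (dt_ds_comm J A HJ HA s t Ht), HAt; ring.
Qed.

Lemma continuity_2d_pt_energy_density s t : J t -> continuity_2d_pt energy_density s t.
Proof.
  intros Ht; unfold energy_density.
  repeat first [apply continuity_2d_pt_minus | apply continuity_2d_pt_plus
               | apply continuity_2d_pt_mult];
    first [ apply continuity_2d_pt_along | apply (smooth2_continuity_2d_pt J) ];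
    auto using smooth2_dt; apply smooth4_lpd; auto; lia.
Qed.

Lemma continuity_2d_pt_energy_rate s t : J t -> continuity_2d_pt energy_rate s t.
Proof.
  intros Ht; unfold energy_rate.
  repeat first [apply continuity_2d_pt_minus | apply continuity_2d_pt_plus
               | apply continuity_2d_pt_mult];
    first [ apply continuity_2d_pt_dt_along | apply continuity_2d_pt_along
          | apply (smooth2_continuity_2d_pt J) ];
    auto using smooth2_dt, smooth2_ds; apply smooth4_lpd; auto; lia.
Qed.

Lemma energy_flux_periodic t : J t -> energy_flux L t = energy_flux 0 t.
Proof.
  intros Ht.
  assert (HA' : forall s t, J t -> A (s + L) t = A s t) by (intros; now apply Hper).
  assert (Hu' : forall s t, J t -> u (s + L) t = u s t) by (intros; now apply Hper).
  assert (Hp' : forall s t, J t -> p (s + L) t = p s t) by (intros; now apply Hper).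
  replace L with (0 + L) by ring; unfold energy_flux, along.
  rewrite (periodic_dt J A), (periodic_ds J A), HA', Hu', Hp'; auto.
Qed.

Lemma energy_integral_derivable t0 : J t0 ->
  derivable_pt_lim (fun t => RInt (fun s => energy_density s t) 0 L) t0 0.
Proof.
  intros Ht0; apply is_derive_Reals.
  pose proof (open_itv_locally J t0 HJ Ht0) as HJt0.
  assert (Hrate : forall s t, J t -> Derive (fun t' => energy_density s t') t = energy_rate s t)
    by (intros; now apply Derive_eq, energy_density_derivable_t).
  assert (Hflux : forall s t, J t -> Derive (fun s' => - energy_flux s' t) s = energy_rate s t)
    by (intros; now apply Derive_eq, energy_balance).
  assert (Hzero : RInt (fun s => Derive (fun t => energy_density s t) t0) 0 L = 0).
  { rewrite (RInt_ext _ (Derive (fun s => - energy_flux s t0))).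
    - rewrite RInt_Derive.
      + rewrite (energy_flux_periodic t0 Ht0); apply Rminus_diag_eq; reflexivity.
      + intros s _; apply ex_derive_Reals_1; exists (energy_rate s t0); now apply energy_balance.
      + intros s _; apply continuous_ext with (fun s => energy_rate s t0).
        { intros s'; symmetry; now apply Hflux. }
        apply continuity_2d_pt_continuous_l, continuity_2d_pt_energy_rate, Ht0.
    - intros s _; rewrite Hrate, Hflux by exact Ht0; reflexivity. }
  assert (Hder : is_derive (fun t => RInt (fun s => energy_density s t) 0 L) t0
                   (RInt (fun s => Derive (fun t => energy_density s t) t0) 0 L)).
  { apply (is_derive_RInt_param (fun t s => energy_density s t)).
    - apply (filter_imp J); [|exact HJt0]; intros t Ht s _.
      apply ex_derive_Reals_1; exists (energy_rate s t); now apply energy_density_derivable_t.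
    - intros s _; apply continuity_2d_pt_ext_loc with (fun t s' => energy_rate s' t).
      + destruct HJt0 as [d Hd]; exists d; intros t s' Ht _; symmetry; apply Hrate, Hd, Ht.
      + apply continuity_2d_pt_swap, continuity_2d_pt_energy_rate, Ht0.
    - apply (filter_imp J); [|exact HJt0]; intros t Ht.
      apply (ex_RInt_continuous (V := R_CompleteNormedModule)); intros s _.
      apply continuity_2d_pt_continuous_l, continuity_2d_pt_energy_density, Ht. }
  rewrite Hzero in Hder; exact Hder.
Qed.

End Energy.

End Solution.

Theorem mainTheorem1
  (L pext : R) (U : R -> R -> R -> R -> Prop) (l : R -> R -> R -> R -> R)
  (J : R -> Prop) (A u p : R -> R -> R) :
  L > 0 ->
  open4 U ->
  smooth_on 4 (pred4 U) (fun4 l) ->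
  open_itv J ->
  smooth_on 2 (strip J) (fun2 A) ->
  smooth_on 2 (strip J) (fun2 u) ->
  smooth_on 2 (strip J) (fun2 p) ->
  (forall s t, J t -> A (s + L) t = A s t /\ u (s + L) t = u s t /\ p (s + L) t = p s t) ->
  (forall s t, J t -> U (A s t) (dt A s t) (ds A s t) (u s t)) ->
  (forall s t, J t ->
     dt (along (lpd 3 l) A u) s t + u s t * ds (along (lpd 3 l) A u) s t
       + 2 * along (lpd 3 l) A u s t * ds u s t
     = - A s t * ds p s t) ->
  (forall s t, J t ->
     dt (along (lpd 1 l) A u) s t + ds (along (lpd 2 l) A u) s t
       - along (lpd 0 l) A u s t
     = p s t - pext) ->
  (forall s t, J t -> dt A s t + ds (fun s' t' => A s' t' * u s' t') s t = 0) ->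
  forall t1 t2 (h1 : J t1) (h2 : J t2)
    (pr1 : Riemann_integrable
             (fun s => along (lpd 1 l) A u s t1 * dt A s t1
                       + along (lpd 3 l) A u s t1 * u s t1 - along l A u s t1) 0 L)
    (pr2 : Riemann_integrable
             (fun s => along (lpd 1 l) A u s t2 * dt A s t2
                       + along (lpd 3 l) A u s t2 * u s t2 - along l A u s t2) 0 L),
    RiemannInt pr1 = RiemannInt pr2.
Proof.
  intros _ HU Hl HJ HA Hu Hp Hper HAU Hmom Harea Hmass t1 t2 h1 h2 pr1 pr2.
  rewrite <- (RInt_Reals _ _ _ pr1), <- (RInt_Reals _ _ _ pr2).
  apply (open_itv_derivable_zero_const J
           (fun t => RInt (fun s => energy_density A u l s t) 0 L)); auto.
  intros t Ht; now apply (energy_integral_derivable U J A u HU HJ HA Hu HAU l p pext L).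
Qed.
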